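(* Let $\mathcal D\subset\mathbb R^n$ be nonempty, compact and convex, let $f$ be differentiable and $\mu$-strongly convex with minimizer $\mathbf x^*$ over $\mathcal D$ and $f^*=f(\mathbf x^* )$, and let $c>0$, $0<p\le1$. Let $(\mathbf x_k,\bar{\mathbf s}_k)$ be generated by the averaged Frank–Wolfe method (defined in the context). If $f(\mathbf x_k)-f^*=O(k^{-q})$ for some $q>0$, then there is a constant $C>0$ such that $\|\bar{\mathbf s}_k-\mathbf x_k\|_2^2\le C\max\{k^{-(q/2+p-1)},\,k^{-2p}\}$.
   Context: $\mathrm{LMO}_{\mathcal D}(x)\in\arg\min_{s\in\mathcal D}\nabla f(x)^Ts$. The averaged Frank–Wolfe method: given $\mathbf x_0\in\mathcal D$ and arbitrary $\bar{\mathbf s}_{-1}\in\mathcal D$, for $k=0,1,\dots$ set $\mathbf s_k=\mathrm{LMO}_{\mathcal D}(\mathbf x_k)$, $\bar{\mathbf s}_k=\bar{\mathbf s}_{k-1}+\beta_k(\mathbf s_k-\bar{\mathbf s}_{k-1})$, $\mathbf x_{k+1}=\mathbf x_k+\gamma_k(\bar{\mathbf s}_k-\mathbf x_k)$ with $\gamma_k=\frac{c}{c+k}$, $\beta_k=\left(\frac{c}{c+k}\right)^p$. *)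

From HB Require Import structures.
From mathcomp Require Import all_boot all_order all_algebra.
From mathcomp Require Import all_classical all_reals all_analysis.
Set Implicit Arguments. Unset Strict Implicit. Unset Printing Implicit Defensive.
Import Order.TTheory GRing.Theory Num.Theory.
Import numFieldNormedType.Exports.
Local Open Scope classical_set_scope.
Local Open Scope ring_scope.

(* Squared Euclidean norm ||v||_2^2 (the library norm on 'rV_n is the max norm). *)
Definition sqnorm2 {R : realType} {n : nat} (v : 'rV[R]_n) : R :=
  \sum_(i < n) v ord0 i ^+ 2.

Definition convex_set_rV {R : realType} {n : nat} (D : set 'rV[R]_n) : Prop :=
  forall x y t, D x -> D y -> 0 <= t <= 1 -> D (t *: x + (1 - t) *: y).

(* mu-strong convexity of a differentiable f (first-order characterization,
   grad f(x)^T v written as the differential 'd f x v). *)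
Definition strongly_convex {R : realType} {n : nat} (mu : R)
  (f : 'rV[R]_n -> R) : Prop :=
  forall x y, f y >= f x + 'd f x (y - x) + mu / 2 * sqnorm2 (y - x).

Definition gamma_k {R : realType} (c : R) (k : nat) : R := c / (c + k%:R).
Definition beta_k {R : realType} (c p : R) (k : nat) : R := (c / (c + k%:R)) `^ p.

(* (x, s, sbar) is a run of the averaged Frank-Wolfe method with initial
   point x 0 in D and arbitrary sbm1 (= \bar s_{-1}) in D.  s k is an output of
   the linear minimization oracle at x k. *)
Definition avg_FW {R : realType} {n : nat} (D : set 'rV[R]_n)
  (f : 'rV[R]_n -> R) (c p : R) (sbm1 : 'rV[R]_n)
  (x s sbar : nat -> 'rV[R]_n) : Prop :=
  D (x 0%N) /\ D sbm1 /\
  (forall k, D (s k) /\ forall y, D y -> 'd f (x k) (s k) <= 'd f (x k) y) /\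
  sbar 0%N = sbm1 + beta_k c p 0 *: (s 0%N - sbm1) /\
  (forall k, sbar k.+1 = sbar k + beta_k c p k.+1 *: (s k.+1 - sbar k)) /\
  (forall k, x k.+1 = x k + gamma_k c k *: (sbar k - x k)).

(* Write d_k = sbar_k - x_k, so that x_{k+1} = x_k + gamma_k d_k.  From step k on both
   averaging weights are O(k^-p), so |d_{j+1} - d_j|^2 <= delta = O(k^-2p), and over a block
   of m steps d stays aligned with d_k: <d_{k+i}, d_k> >= 3/4 |d_k|^2 - m^2 delta.  If
   4 m^2 delta <= |d_k|^2 and m <= k, every step size in the block is at least c/((c+2)k),
   so the iterates travel about (m/k) |d_k| along d_k; strong convexity and the rate of
   f(x_k) - f* bound this travel by O(k^(-q/2)).  The longest admissible block,
   m ~ |d_k| / sqrt delta, gives the bound. *)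

From HB Require Import structures.
From mathcomp Require Import all_boot all_order all_algebra.
From mathcomp Require Import all_classical all_reals all_analysis.
From mathcomp Require Import ring lra.
Import Order.TTheory GRing.Theory Num.Theory.
Import numFieldNormedType.Exports.
Local Open Scope classical_set_scope.
Local Open Scope ring_scope.

Section EuclideanRow.
Context {R : realType} {n : nat}.
Implicit Types (u v w : 'rV[R]_n).

Definition dotv u v : R := \sum_(i < n) u ord0 i * v ord0 i.

Lemma sqnorm2E v : sqnorm2 v = dotv v v.
Proof. by apply: eq_bigr => i _; rewrite expr2. Qed.

Lemma sqnorm2_ge0 v : 0 <= sqnorm2 v.
Proof. by apply: sumr_ge0 => i _; rewrite sqr_ge0. Qed.

Lemma sqnorm2N v : sqnorm2 (- v) = sqnorm2 v.
Proof. by apply: eq_bigr => i _; rewrite mxE sqrrN. Qed.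

Lemma sqnorm2Z a v : sqnorm2 (a *: v) = a ^+ 2 * sqnorm2 v.
Proof. by rewrite /sqnorm2 mulr_sumr; apply: eq_bigr => i _; rewrite mxE exprMn. Qed.

Lemma sqnorm2_leD u v : sqnorm2 (u + v) <= 2 * sqnorm2 u + 2 * sqnorm2 v.
Proof.
rewrite /sqnorm2 !mulr_sumr -big_split; apply: ler_sum => i _; rewrite mxE.
set a := u ord0 i; set b := v ord0 i.
rewrite -subr_ge0 /= (_ : _ - _ = (a - b) ^+ 2) ?sqr_ge0 //; ring.
Qed.

Lemma sqnorm2_le_norm v : sqnorm2 v <= n%:R * `|v| ^+ 2.
Proof.
rewrite /sqnorm2 (_ : _ * _ = \sum_(i < n) `|v| ^+ 2); last first.
  by rewrite sumr_const card_ord mulr_natl.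
apply: ler_sum => i _.
rewrite -real_normK ?num_real // lerXn2r ?nnegrE ?normr_ge0 //.
by rewrite [X in _ <= X]mx_normrE; exact: (le_bigmax _ _ (ord0, i)).
Qed.

Lemma dotvDl u v w : dotv (u + v) w = dotv u w + dotv v w.
Proof. by rewrite /dotv -big_split; apply: eq_bigr => i _; rewrite mxE mulrDl. Qed.

Lemma dotvNl u w : dotv (- u) w = - dotv u w.
Proof. by rewrite /dotv -sumrN; apply: eq_bigr => i _; rewrite mxE mulNr. Qed.

Lemma dotvZl a u w : dotv (a *: u) w = a * dotv u w.
Proof. by rewrite /dotv mulr_sumr; apply: eq_bigr => i _; rewrite mxE mulrA. Qed.

Lemma dotv_le_amgm e u v : 0 < e -> 2 * dotv u v <= e * sqnorm2 u + sqnorm2 v / e.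
Proof.
move=> e0; rewrite /dotv /sqnorm2 mulr_sumr mulr_sumr mulr_suml -big_split /=.
apply: ler_sum => i _; set a := u ord0 i; set b := v ord0 i.
rewrite -subr_ge0 (_ : _ - _ = (e * a - b) ^+ 2 / e); last by field; rewrite gt_eqF.
by rewrite divr_ge0 ?sqr_ge0 ?ltW.
Qed.

Lemma dotv_ge_amgm e u v : 0 < e -> - (e * sqnorm2 u + sqnorm2 v / e) <= 2 * dotv u v.
Proof. by move=> e0; rewrite lerNl -mulrN -dotvNl -(sqnorm2N u) dotv_le_amgm. Qed.

End EuclideanRow.

Lemma compact_sqnorm2_bounded {R : realType} {n : nat} (D : set 'rV[R]_n) :
  compact D -> exists B, forall u v, D u -> D v -> sqnorm2 (u - v) <= B.
Proof.
move=> /compact_bounded [M [_ DM]].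
have /DM DM1 : M < `|M| + 1 by rewrite (le_lt_trans (ler_norm M)) ?ltrDl.
exists (n%:R * (2 * (`|M| + 1)) ^+ 2) => u v Du Dv.
apply: (le_trans (sqnorm2_le_norm _)); rewrite ler_wpM2l //.
rewrite lerXn2r ?nnegrE ?normr_ge0 ?mulr_ge0 ?addr_ge0 //.
by rewrite mulr2n mulrDl mul1r (le_trans (ler_normB _ _)) // lerD ?DM1.
Qed.

Lemma convex_step {R : realType} {n : nat} (D : set 'rV[R]_n) (v w : 'rV[R]_n) (t : R) :
  convex_set_rV D -> D v -> D w -> 0 <= t <= 1 -> D (v + t *: (w - v)).
Proof.
move=> cvxD Dv Dw t01; rewrite (_ : _ + _ = t *: w + (1 - t) *: v); first exact: cvxD.
by apply/rowP => i; rewrite !mxE; ring.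
Qed.

Lemma strongly_convex_quadratic_growth {R : realType} {n : nat}
    {D : set 'rV[R]_n} {f : 'rV[R]_n -> R} {mu : R} {xstar y : 'rV[R]_n} :
  convex_set_rV D -> 0 < mu -> strongly_convex mu f ->
  D xstar -> (forall z, D z -> f xstar <= f z) -> D y ->
  sqnorm2 (y - xstar) <= 4 / mu * (f y - f xstar).
Proof.
move=> cvxD mu0 scf Dxs xs_min Dy.
(* Strong convexity at the midpoint z, towards y and towards xstar: the differentials cancel. *)
set v := y - xstar; set z := (1 / 2 : R) *: y + (1 - 1 / 2) *: xstar.
have Dz : D z by apply: cvxD => //; lra.
have yz : y - z = (1 / 2 : R) *: v by apply/rowP => i; rewrite !mxE; field.
have xz : xstar - z = - ((1 / 2 : R) *: v) by apply/rowP => i; rewrite !mxE; field.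
have := scf z y; have := scf z xstar; have := xs_min _ Dz.
rewrite yz xz raddfN sqnorm2N sqnorm2Z => z_min at_xstar at_y.
rewrite mulrAC ler_pdivlMr //; lra.
Qed.

Lemma powR_sqr {R : realType} (x a : R) : 0 <= x -> (x `^ a) ^+ 2 = x `^ (2 * a).
Proof. by move=> x0; rewrite mulrC powRrM powR_mulrn ?powR_ge0. Qed.

Lemma invr_powR {R : realType} (x a : R) : 0 <= x -> x^-1 `^ a = x `^ (- a).
Proof. by move=> x0; rewrite -powR_inv1 // -powRrM mulN1r. Qed.

Lemma powRN_antitone {R : realType} (x y q : R) : 0 < x <= y -> 0 <= q ->
  y `^ (- q) <= x `^ (- q).
Proof.
case/andP=> x_gt0 xy q_ge0; have y_gt0 := lt_le_trans x_gt0 xy.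
rewrite !powRN lef_pV2 ?posrE ?powR_gt0 //.
by apply: ge0_ler_powR; rewrite // nnegrE ltW.
Qed.

Section StepSizes.
Context {R : realType} {c : R}.
Hypothesis c_gt0 : 0 < c.

Lemma gamma_k_gt0 k : 0 < gamma_k c k.
Proof. by rewrite divr_gt0 // ltr_wpDr. Qed.

Lemma gamma_k_le1 k : gamma_k c k <= 1.
Proof. by rewrite ler_pdivrMr ?ltr_wpDr // mul1r lerDl. Qed.

Lemma gamma_k_le k j : (0 < k <= j)%N -> gamma_k c j <= c / k%:R.
Proof.
case/andP=> k0 kj; rewrite /gamma_k ler_pM2l // lef_pV2 ?posrE ?ltr_wpDr ?ltr0n //.
by apply: ler_wpDl; rewrite ?ler_nat // ltW.
Qed.

Lemma gamma_k_ge k j : (0 < k)%N -> (j <= 2 * k)%N -> c / ((c + 2) * k%:R) <= gamma_k c j.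
Proof.
move=> k0 jk; rewrite /gamma_k ler_pM2l // lef_pV2 ?posrE ?ltr_wpDr ?mulr_gt0 ?ltr0n ?addr_gt0 //.
have : j%:R <= 2 * k%:R :> R by rewrite -natrM ler_nat.
have : 1 <= k%:R :> R by rewrite ler1n.
move: c_gt0; nra.
Qed.

Context {p : R}.
Hypothesis p_gt0 : 0 < p.

Lemma beta_k_ge0 k : 0 <= beta_k c p k.
Proof. exact: powR_ge0. Qed.

Lemma beta_k_le1 k : beta_k c p k <= 1.
Proof.
have c_ge0 : 0 <= c / (c + k%:R) by rewrite divr_ge0 ?ltW ?ltr_wpDr.
by have := ge0_ler_powR (ltW p_gt0) c_ge0 ler01 (gamma_k_le1 k); rewrite powR1.
Qed.

Lemma beta_k_le k j : (0 < k <= j)%N -> beta_k c p j <= (c / k%:R) `^ p.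
Proof.
move=> kj; case/andP: (kj) => k0 _; apply: ge0_ler_powR; rewrite ?nnegrE ?gamma_k_le //.
- exact: ltW.
- exact: ltW (gamma_k_gt0 j).
- by rewrite divr_ge0 ?ltW ?ltr0n.
Qed.

End StepSizes.

Section DirectionDrift.
Context {R : realType} {n : nat}.
Context {x d : nat -> 'rV[R]_n} {gamma : nat -> R} {k : nat}.
Hypothesis x_step : forall j, x j.+1 = x j + gamma j *: d j.

Lemma dotv_displacement m w :
  dotv (x (k + m) - x k) w = \sum_(i < m) gamma (k + i) * dotv (d (k + i)) w.
Proof.
elim: m => [|m IH]; first by rewrite addn0 dotvDl dotvNl subrr big_ord0.
by rewrite big_ord_recr /= addnS x_step addrAC dotvDl dotvZl IH.
Qed.

Context {delta : R}.
Hypothesis d_increment : forall j, (k <= j)%N -> sqnorm2 (d j.+1 - d j) <= delta.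

Lemma dotv_drift m i : (0 < m)%N -> (i <= m)%N ->
  3 / 4 * sqnorm2 (d k) - m%:R ^+ 2 * delta <= dotv (d (k + i)) (d k).
Proof.
move=> m_gt0 im; set A := sqnorm2 (d k).
have m0 : 0 < m%:R :> R by rewrite ltr0n.
have delta0 : 0 <= delta := le_trans (sqnorm2_ge0 _) (d_increment _ (leqnn k)).
set Y := A / (4 * m%:R) + m%:R * delta.
have Y0 : 0 <= Y by rewrite /Y /A addr_ge0 ?divr_ge0 ?mulr_ge0 ?sqnorm2_ge0 ?ler0n.
(* AM-GM with weight 2m bounds the loss of each step by Y. *)
suff drift : A - i%:R * Y <= dotv (d (k + i)) (d k).
  apply: le_trans drift; have : i%:R * Y <= m%:R * Y by rewrite ler_wpM2r ?ler_nat.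
  have -> : m%:R * Y = A / 4 + m%:R ^+ 2 * delta by rewrite /Y; field; rewrite gt_eqF.
  lra.
elim: i im => [|i IH] im; first by rewrite mul0r subr0 addn0 /A sqnorm2E.
rewrite addnS -(subrK (d (k + i)) (d (k + i).+1)) dotvDl -natr1.
set del := d (k + i).+1 - d (k + i).
have := dotv_ge_amgm _ del (d k) (mulr_gt0 (ltr0n R 2) m0).
have -> : 2 * m%:R * sqnorm2 del + sqnorm2 (d k) / (2 * m%:R) =
    2 * (m%:R * sqnorm2 del + A / (4 * m%:R)) by rewrite /A; field; rewrite gt_eqF.
have : m%:R * sqnorm2 del <= m%:R * delta.
  by apply: ler_wpM2l; [exact: ltW | exact/d_increment/leq_addr].
have := IH (ltnW im).
rewrite /Y; lra.
Qed.

Lemma sqnorm2_direction_le m g W : (0 < m)%N -> 0 < g ->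
    (forall i, (i < m)%N -> g <= gamma (k + i)) ->
    sqnorm2 (x (k + m) - x k) <= W ->
    4 * m%:R ^+ 2 * delta <= sqnorm2 (d k) ->
  sqnorm2 (d k) * (m%:R * g) ^+ 2 <= 4 * W.
Proof.
move=> m_gt0 g0 g_le xW big_dir; set A := sqnorm2 (d k); set G := m%:R * g.
have G0 : 0 < G by rewrite mulr_gt0 ?ltr0n.
have lower : G * A / 2 <= dotv (x (k + m) - x k) (d k).
  rewrite dotv_displacement (_ : G * A / 2 = \sum_(i < m) g * (A / 2)); last first.
    by rewrite sumr_const card_ord -mulr_natl /G; field.
  apply: ler_sum => i _; apply: ler_pM; rewrite ?divr_ge0 ?sqnorm2_ge0 ?g_le //; first exact: ltW.
  apply: le_trans _ (@dotv_drift m i m_gt0 (ltnW (ltn_ord i))); rewrite -/A.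
  have : m%:R ^+ 2 * delta <= A / 4 by move: big_dir; rewrite -/A; lra.
  lra.
have := dotv_le_amgm _ (x (k + m) - x k) (d k) (divr_gt0 (ltr0n R 2) G0).
have : 2 / G * sqnorm2 (x (k + m) - x k) <= 2 / G * W.
  by apply: ler_wpM2l xW; rewrite divr_ge0 // ltW.
rewrite -/A (_ : A / (2 / G) = G * A / 2); last by field; rewrite gt_eqF.
move=> scaled_xW upper; have : G * (G * A / 2) <= G * (2 / G * W).
  by apply: ler_wpM2l; [exact: ltW | lra].
rewrite (_ : G * (2 / G * W) = 2 * W); last by field; rewrite gt_eqF.
lra.
Qed.

End DirectionDrift.

Lemma block_length_trichotomy {R : realType} {A delta g W : R} {k : nat} :
    0 <= A -> 0 < delta -> (0 < k)%N ->
    (forall m : nat, (0 < m)%N -> (m <= k)%N -> 4 * m%:R ^+ 2 * delta <= A ->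
       A * (m%:R * g) ^+ 2 <= 4 * W) ->
  [\/ A <= 4 * delta, A ^+ 2 * g ^+ 2 <= 64 * delta * W | A * (k%:R * g) ^+ 2 <= 4 * W].
Proof.
move=> A0 delta0 k0 block.
(* The longest admissible block is m0 = floor (sqrt (A / (4 delta))). *)
set r := Num.sqrt (A / (4 * delta)).
have r2 : r ^+ 2 = A / (4 * delta) by rewrite sqr_sqrtr // divr_ge0 // mulr_ge0 // ltW.
have [r_lb r_ub] := andP (truncn_itv (sqrtr_ge0 (A / (4 * delta)))).
rewrite -/r in r_lb r_ub; set m0 := Num.truncn r in r_lb r_ub.
have admissible m : (m <= m0)%N -> 4 * m%:R ^+ 2 * delta <= A.
  move=> mm0; have : m%:R ^+ 2 <= r ^+ 2.
    by rewrite lerXn2r ?nnegrE ?ler0n ?sqrtr_ge0 // (le_trans _ r_lb) ?ler_nat.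
  by rewrite r2 ler_pdivlMr ?mulr_gt0 //; lra.
have [m0_eq0 | m0_gt0] := posnP m0.
  constructor 1; move: r_ub; rewrite m0_eq0 => r_lt1.
  have : r ^+ 2 < 1 by rewrite expr_lt1 ?sqrtr_ge0.
  by rewrite r2 ltr_pdivrMr ?mulr_gt0 // mul1r => /ltW.
have [m0k | km0] := leqP m0 k.
  constructor 2; have := block m0 m0_gt0 m0k (admissible m0 (leqnn _)).
  have A_le : A <= 16 * delta * m0%:R ^+ 2.
    have : r ^+ 2 <= (2 * m0%:R) ^+ 2.
      rewrite lerXn2r ?nnegrE ?sqrtr_ge0 ?mulr_ge0 ?ler0n // (le_trans (ltW r_ub)) //.
      by rewrite -natrM ler_nat mul2n -addnn -addn1 leq_add2l.
    by rewrite r2 ler_pdivrMr ?mulr_gt0 //; lra.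
  have Ag0 : 0 <= A * g ^+ 2 by rewrite mulr_ge0 ?sqr_ge0.
  rewrite exprMn; nra.
constructor 3; exact: block k k0 (leqnn k) (admissible k (ltnW km0)).
Qed.

Section AveragedFrankWolfe.
Context {R : realType} {n : nat} {D : set 'rV[R]_n} {f : 'rV[R]_n -> R}.
Context {c p : R} {sbm1 : 'rV[R]_n} {x s sbar : nat -> 'rV[R]_n}.
Hypotheses (convD : convex_set_rV D) (c_gt0 : 0 < c) (p_gt0 : 0 < p) (p_le1 : p <= 1).
Hypothesis run : avg_FW D f c p sbm1 x s sbar.

Let s_mem k : D (s k). Proof. by case: run => _ [_ [/(_ k) []]]. Qed.

Lemma avg_FW_sbar_mem k : D (sbar k).
Proof.
have [_ [Dsbm1 [_ [sbar0 [sbarS _]]]]] := run.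
have beta01 j : 0 <= beta_k c p j <= 1 by rewrite beta_k_ge0 (beta_k_le1 c_gt0 p_gt0).
by elim: k => [|k IH]; [rewrite sbar0 | rewrite sbarS]; apply: convex_step.
Qed.

Lemma avg_FW_x_mem k : D (x k).
Proof.
have [Dx0 [_ [_ [_ [_ xS]]]]] := run.
elim: k => [|k IH] //; rewrite xS; apply: convex_step => //; first exact: avg_FW_sbar_mem.
by rewrite (ltW (gamma_k_gt0 c_gt0 _)) gamma_k_le1.
Qed.

Let d j := sbar j - x j.

Lemma avg_FW_x_step j : x j.+1 = x j + gamma_k c j *: d j.
Proof. by case: run => _ [_ [_ [_ [_ ->]]]]. Qed.

Context {B : R}.
Hypothesis diamD : forall u v, D u -> D v -> sqnorm2 (u - v) <= B.

(* The + 1 only keeps L positive. *)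
Let L := 2 * B * ((c `^ p) ^+ 2 + c ^+ 2) + 1.

Let L_gt0 : 0 < L.
Proof.
have B_ge0 : 0 <= B := le_trans (sqnorm2_ge0 _) (diamD _ _ (avg_FW_x_mem 0) (avg_FW_x_mem 0)).
by rewrite ltr_wpDl // !mulr_ge0 ?addr_ge0 ?sqr_ge0.
Qed.

Lemma avg_FW_direction_increment k j : (0 < k <= j)%N ->
  sqnorm2 (d j.+1 - d j) <= L * k%:R `^ (- (2 * p)).
Proof.
move=> kj; have [k_gt0 _] := andP kj.
have k0 : 0 <= k%:R :> R := ler0n _ _.
have -> : d j.+1 - d j = beta_k c p j.+1 *: (s j.+1 - sbar j) + - (gamma_k c j *: d j).
  by rewrite /d; case: run => _ [_ [_ [_ [-> ->]]]]; apply/rowP => i; rewrite !mxE; ring.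
apply: (le_trans (sqnorm2_leD _ _)); rewrite sqnorm2N !sqnorm2Z.
have pow_ge0 := powR_ge0 (k%:R) (- p).
have beta_le : beta_k c p j.+1 ^+ 2 <= (c `^ p) ^+ 2 * k%:R `^ (- (2 * p)).
  have h : beta_k c p j.+1 <= c `^ p * k%:R `^ (- p).
    rewrite -invr_powR // -powRM ?invr_ge0 ?(ltW c_gt0) //; apply: beta_k_le => //.
    by case/andP: kj => -> /leqW.
  by rewrite -mulrN -powR_sqr // -exprMn lerXn2r ?nnegrE ?beta_k_ge0 ?(le_trans _ h) ?beta_k_ge0.
have gamma_le : gamma_k c j ^+ 2 <= c ^+ 2 * k%:R `^ (- (2 * p)).
  have g0 := ltW (gamma_k_gt0 c_gt0 j).
  (* c / k <= c * k^-p is where p <= 1 is needed. *)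
  have h : gamma_k c j <= c * k%:R `^ (- p).
    apply: (le_trans (gamma_k_le c_gt0 _ _ kj)); rewrite ler_pM2l //.
    by rewrite -powR_inv1 // ler_powR ?ler1n ?lerN2.
  by rewrite -mulrN -powR_sqr // -exprMn lerXn2r ?nnegrE ?(le_trans g0 h).
have := diamD _ _ (s_mem j.+1) (avg_FW_sbar_mem j).
have := diamD _ _ (avg_FW_sbar_mem j) (avg_FW_x_mem j).
have := sqnorm2_ge0 (s j.+1 - sbar j); have := sqnorm2_ge0 (d j).
have := powR_ge0 (k%:R) (- (2 * p)).
rewrite /L -/(d j); nra.
Qed.

Context {xstar : 'rV[R]_n} {a q : R}.
Hypotheses (a_ge0 : 0 <= a) (q_ge0 : 0 <= q).
Hypothesis x_rate : forall k, (0 < k)%N -> sqnorm2 (x k - xstar) <= a * k%:R `^ (- q).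

Lemma avg_FW_displacement k m : (0 < k)%N ->
  sqnorm2 (x (k + m) - x k) <= 4 * a * k%:R `^ (- q).
Proof.
move=> k_gt0; rewrite (_ : _ - _ = (x (k + m) - xstar) + - (x k - xstar)); last first.
  by rewrite opprB addrA subrK.
apply: (le_trans (sqnorm2_leD _ _)); rewrite sqnorm2N.
have : (k + m)%:R `^ (- q) <= k%:R `^ (- q) :> R.
  by rewrite powRN_antitone // ltr0n k_gt0 ler_nat leq_addr.
have := x_rate _ k_gt0; have := x_rate _ (ltn_addr m k_gt0).
have := a_ge0; nra.
Qed.

Lemma avg_FW_direction_cases k : (0 < k)%N ->
  [\/ sqnorm2 (d k) <= 4 * L * k%:R `^ (- (2 * p)),
      sqnorm2 (d k) ^+ 2 <= 256 * L * a * ((c + 2) / c) ^+ 2 *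
        (k%:R ^+ 2 * k%:R `^ (- (2 * p)) * k%:R `^ (- q)) |
      sqnorm2 (d k) <= 16 * a * ((c + 2) / c) ^+ 2 * k%:R `^ (- q)].
Proof.
move=> k_gt0; have k0 : 0 < k%:R :> R by rewrite ltr0n.
set g := c / ((c + 2) * k%:R); set A := sqnorm2 (d k).
have g_gt0 : 0 < g by rewrite divr_gt0 ?mulr_gt0 ?addr_gt0.
have delta_gt0 : 0 < L * k%:R `^ (- (2 * p)) by rewrite mulr_gt0 ?powR_gt0 ?L_gt0.
have g_le i m : (i < m)%N -> (m <= k)%N -> g <= gamma_k c (k + i).
  move=> im mk; apply: gamma_k_ge => //.
  by rewrite mul2n -addnn leq_add2l (leq_trans (ltnW im)).
have block m : (0 < m)%N -> (m <= k)%N ->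
    4 * m%:R ^+ 2 * (L * k%:R `^ (- (2 * p))) <= A ->
    A * (m%:R * g) ^+ 2 <= 4 * (4 * a * k%:R `^ (- q)).
  move=> m_gt0 mk; apply: (sqnorm2_direction_le avg_FW_x_step) => //.
  - by move=> j kj; apply: avg_FW_direction_increment; rewrite k_gt0.
  - by move=> i im; apply: (g_le i m).
  - exact: avg_FW_displacement.
have [h|h|h] := block_length_trichotomy (sqnorm2_ge0 (d k)) delta_gt0 k_gt0 block.
- by constructor 1; rewrite -mulrA.
- constructor 2; rewrite -/A in h *.
  have -> : A ^+ 2 = A ^+ 2 * g ^+ 2 * ((c + 2) * k%:R / c) ^+ 2.
    by rewrite /g; field; rewrite !gt_eqF ?addr_gt0.
  apply: (le_trans (ler_wpM2r (sqr_ge0 _) h)); rewrite le_eqVlt; apply/orP; left.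
  by apply/eqP; field; rewrite gt_eqF.
- constructor 3; rewrite -/A in h *.
  have -> : A = A * (k%:R * g) ^+ 2 * ((c + 2) / c) ^+ 2.
    by rewrite /g; field; rewrite !gt_eqF ?addr_gt0.
  apply: (le_trans (ler_wpM2r (sqr_ge0 _) h)); rewrite le_eqVlt; apply/orP; left.
  by apply/eqP; field; rewrite gt_eqF.
Qed.

Lemma avg_FW_direction_rate : exists C, 0 < C /\ forall k, (0 < k)%N ->
  sqnorm2 (sbar k - x k) <= C * Num.max (k%:R `^ (- (q / 2 + p - 1))) (k%:R `^ (- (2 * p))).
Proof.
set kappa := 16 * a * ((c + 2) / c) ^+ 2.
have kappa_ge0 : 0 <= kappa by rewrite /kappa mulr_ge0 ?sqr_ge0 // mulr_ge0.
have sqrt_ge0 := sqrtr_ge0 (16 * L * kappa).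
exists (4 * L + Num.sqrt (16 * L * kappa) + kappa).
split; first by rewrite ltr_wpDr // ltr_wpDr // mulr_gt0 ?L_gt0.
move=> k k_gt0; have k0 : 0 <= k%:R :> R := ler0n _ _.
set T := k%:R `^ _; set U := k%:R `^ _; set M := Num.max T U.
have T_ge0 : 0 <= T := powR_ge0 _ _; have U_ge0 : 0 <= U := powR_ge0 _ _.
have TM : T <= M by rewrite le_max lexx.
have UM : U <= M by rewrite le_max lexx orbT.
have QT : k%:R `^ (- q) <= T by rewrite ler_powR ?ler1n //; move: p_le1 q_ge0; lra.
have T2 : k%:R ^+ 2 * k%:R `^ (- (2 * p)) * k%:R `^ (- q) = T ^+ 2.
  have kn0 : k%:R != 0 :> R by rewrite pnatr_eq0 -lt0n.
  rewrite powR_sqr // -powR_mulrn // -!powRD ?kn0 ?implybT //.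
  by congr (_ `^ _); field.
have [h|h|h] := avg_FW_direction_cases _ k_gt0; rewrite -/(d k).
- apply: (le_trans h); apply: ler_pM => //; first by rewrite mulr_ge0 // ltW.
  by rewrite -addrA lerDl addr_ge0.
- have : sqnorm2 (d k) <= Num.sqrt (16 * L * kappa) * T.
    have : sqnorm2 (d k) ^+ 2 <= (Num.sqrt (16 * L * kappa) * T) ^+ 2.
      rewrite exprMn sqr_sqrtr -?T2 /kappa; last by rewrite mulr_ge0 // mulr_ge0 // ltW.
      by move: h; rewrite !mulrA; lra.
    by rewrite ler_pXn2r ?nnegrE ?sqnorm2_ge0 ?mulr_ge0.
  move/le_trans; apply; apply: ler_pM => //.
  by rewrite addrAC lerDr addr_ge0 // mulr_ge0 // ltW.
- apply: (le_trans h); apply: ler_pM; rewrite ?powR_ge0 ?(le_trans QT TM) //.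
  by rewrite lerDr addr_ge0 // mulr_ge0 // ltW.
Qed.

End AveragedFrankWolfe.

Theorem corollary3 (R : realType) (n : nat) (D : set 'rV[R]_n)
  (f : 'rV[R]_n -> R) (mu : R) (xstar : 'rV[R]_n) (c p q : R)
  (sbm1 : 'rV[R]_n) (x s sbar : nat -> 'rV[R]_n) :
  D !=set0 -> compact D -> convex_set_rV D ->
  (forall z, differentiable f z) -> 0 < mu -> strongly_convex mu f ->
  D xstar -> (forall y, D y -> f xstar <= f y) ->
  0 < c -> 0 < p -> p <= 1 ->
  avg_FW D f c p sbm1 x s sbar ->
  0 < q ->
  (exists K : R, forall k : nat, (1 <= k)%N ->
      f (x k) - f xstar <= K * (k%:R `^ (- q))) ->
  exists C : R, 0 < C /\ forall k : nat, (1 <= k)%N ->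
    sqnorm2 (sbar k - x k) <=
      C * Num.max (k%:R `^ (- (q / 2 + p - 1))) (k%:R `^ (- (2 * p))).
Proof.
move=> _ cpctD convD _ mu_gt0 scvx Dxs xs_min c_gt0 p_gt0 p_le1 run q_gt0 [K f_rate].
have [B diamD] := compact_sqnorm2_bounded _ cpctD.
apply: (avg_FW_direction_rate convD c_gt0 p_gt0 p_le1 run diamD
  (xstar := xstar) (a := 4 / mu * `|K|) _ (ltW q_gt0)) => [|k k_gt0].
  by rewrite mulr_ge0 ?normr_ge0 ?divr_ge0 ?ltW.
have x_mem := avg_FW_x_mem convD c_gt0 p_gt0 run k.
apply: (le_trans (strongly_convex_quadratic_growth convD mu_gt0 scvx Dxs xs_min x_mem)).
rewrite -[leRHS]mulrA; apply: ler_wpM2l; first by rewrite divr_ge0 ?ltW.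
apply: (le_trans (f_rate k k_gt0)); apply: ler_wpM2r; [exact: powR_ge0 | exact: ler_norm].
Qed.
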